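(* Let $\mathfrak{X}$ be a Bourgain–Delbaen space determined by $(\Gamma_q,i_q)_q$ and let $\Gamma'$ be a self-determined subset of $\Gamma$. Write $\{q:\Gamma'\cap\Delta_q\neq\varnothing\}=\{q_0<q_1<q_2<\cdots\}$, $\Gamma'_{q}=\Gamma'\cap\Gamma_q$, let $R:\ell_\infty(\Gamma)\to\ell_\infty(\Gamma')$ be restriction onto $\Gamma'$, $r'_{q_s}:\ell_\infty(\Gamma_{q_s})\to\ell_\infty(\Gamma'_{q_s})$ the restriction onto $\Gamma'_{q_s}$, and $i'_{q_s}:\ell_\infty(\Gamma'_{q_s})\to\ell_\infty(\Gamma')$, $i'_{q_s}(x)=R(i_{q_s}(x))$, where $x$ is identified with a vector of $\ell_\infty(\Gamma_{q_s})$ vanishing off $\Gamma'_{q_s}$. Then for every $s$ and every $x\in\ell_\infty(\Gamma_{q_s})$, $R(i_{q_s}(x))=i'_{q_s}(r'_{q_s}(x))$.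
   Context: Bourgain–Delbaen spaces: $(\Gamma_q)_{q\geqslant1}$ is a strictly increasing sequence of non-empty finite sets, $\Gamma=\bigcup_q\Gamma_q$, and $i_q:\ell_\infty(\Gamma_q)\to\ell_\infty(\Gamma)$ are linear extension operators ($i_q(x)|_{\Gamma_q}=x$) with $\sup_q\|i_q\|<\infty$, which are compatible: for $p<q$, $i_p=i_q\circ r_q\circ i_p$, with $r_q$ restriction to $\Gamma_q$. Set $\Delta_1=\Gamma_1$, $\Delta_{q+1}=\Gamma_{q+1}\setminus\Gamma_q$, and for $\gamma\in\Delta_q$ let $d_\gamma=i_q(e_\gamma)$; $\mathfrak{X}$ is the closed span of $\{d_\gamma\}$ in $\ell_\infty(\Gamma)$. For $\gamma\in\Gamma$, $e_\gamma^*$ is evaluation at $\gamma$ restricted to $\mathfrak{X}$ and $(d_\gamma^* )$ are the functionals biorthogonal to $(d_\gamma)$. An infinite subset $\Gamma'\subseteq\Gamma$ is self-determined if each $d_\gamma^*$, $\gamma\in\Gamma'$, lies in the linear span of $\{e_\eta^*:\eta\in\Gamma'\}$. *)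

From HB Require Import structures.
From mathcomp Require Import all_boot all_order all_algebra.
From mathcomp Require Import boolp classical_sets cardinality reals.
Set Implicit Arguments. Unset Strict Implicit. Unset Printing Implicit Defensive.
Import Order.TTheory GRing.Theory Num.Theory.
Local Open Scope classical_set_scope.
Local Open Scope ring_scope.

(* Index q ranges over nat (q = 0 plays the role of the paper's q = 1).
   Gamma : nat -> set T, with T playing the role of Gamma = U_q Gamma_q.
   An element of l_oo(Gamma_q) (Gamma_q finite) is any function
   sig (Gamma q) -> R; an element of l_oo(Gamma) is a bounded T -> R.
   ext : forall q, (sig (Gamma q) -> R) -> (T -> R) is the family i_q. *)

Section BD.
Context {R : realType} {T : choiceType}.

Definition restr (Gamma : nat -> set T) (q : nat) (y : T -> R) :
  sig (Gamma q) -> R := fun s => y (proj1_sig s).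

Definition is_BD_data (Gamma : nat -> set T)
  (ext : forall q, (sig (Gamma q) -> R) -> (T -> R)) : Prop :=
  (forall q, finite_set (Gamma q)) /\
      (forall q, Gamma q !=set0) /\
      (forall q, Gamma q `<` Gamma q.+1) /\
      (forall t : T, exists q, Gamma q t) /\
      (forall q (a : R) (x y : sig (Gamma q) -> R),
          ext q (fun s => a * x s + y s) = (fun t => a * ext q x t + ext q y t)) /\
      (forall q (x : sig (Gamma q) -> R) (s : sig (Gamma q)),
          ext q x (proj1_sig s) = x s) /\
      (* sup_q ||i_q|| < oo (this also gives i_q x in l_oo(Gamma)) *)
      (exists C : R, forall q (x : sig (Gamma q) -> R) (M : R),
          (forall s, `|x s| <= M) -> forall t, `|ext q x t| <= C * M) /\
      (forall p q, (p < q)%N -> forall x : sig (Gamma p) -> R,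
          ext p x = ext q (@restr Gamma q (ext p x))).

Definition Delta (Gamma : nat -> set T) (q : nat) : set T :=
  if q is q'.+1 then Gamma q'.+1 `\` Gamma q' else Gamma 0%N.

Definition dvec (Gamma : nat -> set T)
  (ext : forall q, (sig (Gamma q) -> R) -> (T -> R)) (q : nat) (g : T) : T -> R :=
  ext q (fun s => if proj1_sig s == g then 1 else 0).

(* Gamma' is self-determined: Gamma' is infinite and, for every gamma in
   Gamma', d_gamma^* is a finite linear combination sum_eta a_eta e_eta^*
   with eta in Gamma'.  Since both sides are bounded linear functionals on
   X = closed span of the d_eta, equality holds iff they agree on every
   d_eta, i.e. iff the combination is biorthogonal to (d_eta); this is how
   "equals d_gamma^*" is expressed. *)
Definition self_determined (Gamma : nat -> set T)
  (ext : forall q, (sig (Gamma q) -> R) -> (T -> R)) (Gamma' : set T) : Prop :=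
  ~ finite_set Gamma' /\
  forall g, Gamma' g ->
    exists (S : seq T) (a : T -> R),
      (forall e, e \in S -> Gamma' e) /\
      forall q eta, Delta Gamma q eta ->
        \sum_(e <- S) a e * dvec ext q eta e = (eta == g)%:R.

End BD.

(* Let g in Gamma' lie in Delta_(p+1) with p >= q, and let y vanish on
   Gamma' /\ Gamma_q; by induction on p, i_q y vanishes on Gamma' /\ Gamma_p.
   Write d_g^* = sum_(e in S) a_e e_e^* with S in Gamma'.  As i_q y lies in the
   span of the d_t with t in Gamma_q and g is not in Gamma_q, d_g^*(i_q y) = 0.
   Testing biorthogonality on the d_t, level by level from the top of S down,
   shows that outside Gamma_p the combination acts exactly as e_g^*; hence
   0 = d_g^*(i_q y) = sum_(e in S /\ Gamma_p) a_e (i_q y)(e) + (i_q y)(g)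
   = (i_q y)(g). *)

From HB Require Import structures.
From mathcomp Require Import all_boot all_order all_algebra.
From mathcomp Require Import boolp classical_sets cardinality reals.
From mathcomp Require Import zify.
Import Order.TTheory GRing.Theory Num.Theory.
Local Open Scope classical_set_scope.
Local Open Scope ring_scope.

Lemma leq_down_ind (P : nat -> Prop) (lo hi : nat) :
  P hi -> (forall m, (lo <= m < hi)%N -> P m.+1 -> P m) ->
  forall m, (lo <= m <= hi)%N -> P m.
Proof.
move=> Phi step m /andP[lom mhi]; rewrite -(subKn mhi).
have : (hi - m <= hi - lo)%N by lia.
elim: (hi - m)%N => [|k IH] k_le; first by rewrite subn0.
apply: step; first lia.
have -> : (hi - k.+1).+1 = (hi - k)%N by lia.
by apply: IH; lia.
Qed.

Section BourgainDelbaen.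
Context {R : realType} {T : choiceType} {Gamma : nat -> set T}.
Context {ext : forall q, (sig (Gamma q) -> R) -> (T -> R)}.

Hypothesis Gamma_finite : forall q, finite_set (Gamma q).
Hypothesis Gamma_subS : forall q, Gamma q `<=` Gamma q.+1.
Hypothesis Gamma_cover : forall t, exists q, Gamma q t.
Hypothesis ext_linear : forall q (c : R) (x y : sig (Gamma q) -> R),
  ext q (fun s => c * x s + y s) = (fun t => c * ext q x t + ext q y t).
Hypothesis ext_restr : forall q (x : sig (Gamma q) -> R) (s : sig (Gamma q)),
  ext q x (sval s) = x s.
Hypothesis ext_compat : forall p q, (p < q)%N -> forall x : sig (Gamma p) -> R,
  ext p x = ext q (@restr R T Gamma q (ext p x)).

Lemma Gamma_le {m n} : (m <= n)%N -> Gamma m `<=` Gamma n.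
Proof. exact: homo_leq (@subset_refl T) (@subset_trans T) Gamma_subS m n. Qed.

Lemma Delta_sub {p} : Delta Gamma p `<=` Gamma p.
Proof. by case: p => [|p] t //= []. Qed.

Lemma Gamma_enum q :
  exists2 L : seq T, uniq L & forall t, t \in L <-> Gamma q t.
Proof.
have [s Es] := (finite_seqP (Gamma q)).1 (Gamma_finite q).
exists (undup s) => [|t]; first exact: undup_uniq.
by rewrite mem_undup Es.
Qed.

Lemma Gamma_bound (s : seq T) n :
  exists2 M, (n <= M)%N & forall e, e \in s -> Gamma M e.
Proof.
elim: s => [|e s [M nM sM]]; first by exists n.
have [q Gqe] := Gamma_cover e.
exists (maxn M q) => [|e']; first by rewrite (leq_trans nM) ?leq_maxl.
rewrite in_cons => /predU1P[->|/sM GMe'].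
  exact: Gamma_le (leq_maxr M q) _ Gqe.
exact: Gamma_le (leq_maxl M q) _ GMe'.
Qed.

Definition zext {q} (x : sig (Gamma q) -> R) (t : T) : R :=
  if pselect (Gamma q t) is left h then x (exist _ t h) else 0.

Lemma zextE {q} (x : sig (Gamma q) -> R) {t} (h : Gamma q t) :
  zext x t = x (exist _ t h).
Proof.
rewrite /zext; case: pselect => [h'|/(_ h)//].
by rewrite (Prop_irrelevance h' h).
Qed.

Lemma ext_restrE {q} (x : sig (Gamma q) -> R) {t} (h : Gamma q t) :
  ext q x t = x (exist _ t h).
Proof. exact: ext_restr (exist _ t h). Qed.

Lemma ext_compat_le {p q} : (p <= q)%N -> forall x : sig (Gamma p) -> R,
  ext p x = ext q (@restr R T Gamma q (ext p x)).
Proof.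
rewrite leq_eqVlt => /predU1P[<- x|/ext_compat//].
by congr (ext p); apply: funext => s; rewrite /restr ext_restr.
Qed.

Lemma ext0 q : ext q (fun=> 0) = fun=> 0.
Proof.
have := ext_linear q (-1) (fun=> 0) (fun=> 0).
have -> : (fun _ : sig (Gamma q) => -1 * 0 + 0) = (fun=> 0 : R).
  by apply: funext => s; rewrite mulr0 addr0.
by move=> ->; apply: funext => t; rewrite mulN1r addNr.
Qed.

Lemma ext_sum q (L : seq T) (c : T -> R) (f : T -> sig (Gamma q) -> R) :
  ext q (fun s => \sum_(t <- L) c t * f t s) =
  fun u => \sum_(t <- L) c t * ext q (f t) u.
Proof.
elim: L => [|t0 L IH].
  under eq_fun do rewrite big_nil.
  by rewrite ext0; apply: funext => u; rewrite big_nil.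
under eq_fun do rewrite big_cons.
by rewrite ext_linear IH; apply: funext => u; rewrite big_cons.
Qed.

Lemma ext_expand {q} {L : seq T} :
  uniq L -> (forall t, t \in L <-> Gamma q t) ->
  forall x : sig (Gamma q) -> R,
  ext q x = fun u => \sum_(t <- L) zext x t * dvec ext q t u.
Proof.
move=> uL memL x; rewrite -ext_sum; congr (ext q); apply: funext => s.
have sL : sval s \in L by apply/memL; exact: proj2_sig.
rewrite (bigD1_seq (sval s)) //= eqxx mulr1 big1 ?addr0.
  by case: s sL => t h _; rewrite (zextE _ h).
by move=> t /negPf; rewrite eq_sym => ->; rewrite mulr0.
Qed.

Section Functional.
Context {S : seq T} {a : T -> R}.

Definition ev_comb (u : T -> R) : R := \sum_(e <- S) a e * u e.

Lemma ev_comb_ext {q} {L : seq T} :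
  uniq L -> (forall t, t \in L <-> Gamma q t) ->
  forall x : sig (Gamma q) -> R,
  ev_comb (ext q x) = \sum_(t <- L) zext x t * ev_comb (dvec ext q t).
Proof.
move=> uL memL x; rewrite /ev_comb (ext_expand uL memL x) /=.
under eq_bigr do rewrite big_distrr.
rewrite exchange_big; apply: eq_bigr => t _.
by rewrite big_distrr; apply: eq_bigr => e _; exact: mulrCA.
Qed.

(* r_q d_t differs from e_t only on Gamma_q \ Gamma_p. *)
Lemma ev_comb_dvec_le {p q t} : (p <= q)%N -> Gamma p t ->
  (forall t', Gamma q t' -> ~ Gamma p t' -> ev_comb (dvec ext q t') = 0) ->
  ev_comb (dvec ext p t) = ev_comb (dvec ext q t).
Proof.
move=> pq Gpt out.
have [L uL memL] := Gamma_enum q.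
have Gqt : Gamma q t := Gamma_le pq _ Gpt.
rewrite {1}/dvec (ext_compat_le pq) (ev_comb_ext uL memL).
rewrite (bigD1_seq t) ?(memL t) //= (zextE _ Gqt) /restr /= (ext_restrE _ Gpt).
rewrite /= eqxx mul1r big_seq_cond big1 ?addr0 // => t' /andP[/memL Gqt' t't].
rewrite (zextE _ Gqt') /restr /=.
have [Gpt'|nGpt'] := pselect (Gamma p t'); last by rewrite out ?mulr0.
by rewrite (ext_restrE _ Gpt') /= (negbTE t't) mul0r.
Qed.

Lemma ev_comb_dvec_eq0 q :
  (forall p t, (p <= q)%N -> Delta Gamma p t -> ev_comb (dvec ext p t) = 0) ->
  forall t, Gamma q t -> ev_comb (dvec ext q t) = 0.
Proof.
move=> dvec0.
have out p : (0 <= p <= q)%N ->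
    forall t, Gamma q t -> ~ Gamma p t -> ev_comb (dvec ext q t) = 0.
  move: p; apply: leq_down_ind => [t _ //|m /andP[_ mq] IH t Gqt nGmt].
  have [Gm1t|] := pselect (Gamma m.+1 t); last exact: IH.
  by rewrite -(ev_comb_dvec_le mq Gm1t IH) dvec0.
move=> t Gqt; have [G0t|] := pselect (Gamma 0 t); last exact: out.
by rewrite -(ev_comb_dvec_le (leq0n q) G0t (out 0%N (leq0n q))) dvec0.
Qed.

Context {g : T}.
Hypothesis ev_comb_dvec : forall p eta, Delta Gamma p eta ->
  ev_comb (dvec ext p eta) = (eta == g)%:R.

Lemma ev_comb_ext_eq0 {q} : ~ Gamma q g -> forall x : sig (Gamma q) -> R,
  ev_comb (ext q x) = 0.
Proof.
move=> nGqg x; have [L uL memL] := Gamma_enum q.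
rewrite (ev_comb_ext uL memL) big_seq big1 // => t /memL Gqt.
rewrite ev_comb_dvec_eq0 ?mulr0 // => p eta pq Deta.
rewrite ev_comb_dvec //; case: eqP => // eta_g.
by case: nGqg; rewrite -eta_g; exact: Gamma_le pq _ (Delta_sub _ Deta).
Qed.

Definition ev_tail m (u : T -> R) : R :=
  \sum_(e <- S | e \notin Gamma m) a e * u e.

Lemma ev_comb_split m (v : T -> R) :
  ev_comb v = \sum_(e <- S | e \in Gamma m) a e * v e + ev_tail m v.
Proof. exact: bigID. Qed.

Lemma ev_tailS m (v : T -> R) :
  ev_tail m v = \sum_(e <- S | (e \in Gamma m.+1) && (e \notin Gamma m)) a e * v e
                + ev_tail m.+1 v.
Proof.
rewrite /ev_tail (bigID (fun e => e \in Gamma m.+1)) /=.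
congr (_ + _); apply: eq_bigl => e; first by rewrite andbC.
case: (boolP (e \in Gamma m.+1)) => [|nGe]; first by rewrite andbF.
rewrite andbT; apply: contra nGe => /set_mem Ge.
by apply: mem_set; exact: Gamma_le (leqnSn m) _ Ge.
Qed.

Lemma ev_tail_layer m : Gamma m.+1 g -> (forall u, ev_tail m.+1 u = 0) ->
  forall u, ev_tail m u = (g \notin Gamma m)%:R * u g.
Proof.
move=> Gg tail0 u.
(* Test the functional on i_(m+1) of u restricted to Delta_(m+1), which is a
   combination of the d_t with t in Delta_(m+1). *)
pose x (s : sig (Gamma m.+1)) := if sval s \in Gamma m then 0 else u (sval s).
have [L uL memL] := Gamma_enum m.+1.
transitivity (ev_comb (ext m.+1 x)).
  rewrite ev_tailS (ev_comb_split m.+1) !tail0 !addr0.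
  rewrite big_mkcond [RHS]big_mkcond; apply: eq_bigr => e _.
  case: (boolP (e \in Gamma m.+1)) => [/set_mem Ge|//].
  by rewrite (ext_restrE _ Ge) /x /=; case: (e \in Gamma m); rewrite ?mulr0.
have coef t : Gamma m.+1 t ->
    zext x t * ev_comb (dvec ext m.+1 t) =
    (t \notin Gamma m)%:R * u t * (t == g)%:R.
  move=> Gt; rewrite (zextE _ Gt) /x /=.
  case: (boolP (t \in Gamma m)) => [_|/negP nGmt]; first by rewrite !mul0r.
  rewrite ev_comb_dvec ?mulr1n ?mul1r //.
  by split=> // /mem_set.
rewrite (ev_comb_ext uL memL) (bigD1_seq g) //=; last exact/memL.
rewrite coef // eqxx mulr1 big_seq_cond big1 ?addr0 // => t /andP[/memL Gt tg].
by rewrite coef // (negbTE tg) mulr0.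
Qed.

Lemma ev_tail_eq {p} : Delta Gamma p.+1 g -> forall u, ev_tail p u = u g.
Proof.
case=> Gg nGg u.
have [M pM SM] := Gamma_bound S p.+1.
have GMg : Gamma M g := Gamma_le pM _ Gg.
suff tail_m : forall m, (p <= m <= M)%N ->
    forall v, ev_tail m v = (g \notin Gamma m)%:R * v g.
  have nGpg : g \notin Gamma p by apply/negP => /set_mem.
  by rewrite tail_m ?leqnn ?(ltnW pM) // nGpg mulr1n mul1r.
apply: leq_down_ind => [v|m /andP[pm mM] IH v].
  rewrite (mem_set GMg) mul0r /ev_tail big_seq_cond big1 // => e /andP[/SM GMe].
  by rewrite (mem_set GMe).
have Gm1g : Gamma m.+1 g := Gamma_le (pm : (p < m.+1)%N) _ Gg.
by apply: ev_tail_layer => // w; rewrite IH (mem_set Gm1g) mul0r.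
Qed.

End Functional.

Lemma ext_eq0_on {G' : set T} : self_determined ext G' ->
  forall q (y : sig (Gamma q) -> R), (forall s, G' (sval s) -> y s = 0) ->
  forall g, G' g -> ext q y g = 0.
Proof.
move=> [_ sdG'] q y y0.
have in_q g : Gamma q g -> G' g -> ext q y g = 0.
  by move=> Gqg G'g; rewrite (ext_restrE _ Gqg) y0.
suff Gp p g : G' g -> Gamma p g -> ext q y g = 0.
  by move=> g G'g; have [p Gpg] := Gamma_cover g; exact: Gp p g G'g Gpg.
elim: p g => [|p IH] g G'g Gpg.
  by apply: in_q => //; exact: Gamma_le (leq0n q) _ Gpg.
have [Gqg|nGqg] := pselect (Gamma q g); first exact: in_q.
have [Gp'g|nGp'g] := pselect (Gamma p g); first exact: IH.
have [S [a [SG' Sa]]] := sdG' g G'g.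
have Dg : Delta Gamma p.+1 g by split.
rewrite -(ev_tail_eq Sa Dg (ext q y)) -[RHS](ev_comb_ext_eq0 Sa nGqg y).
rewrite (ev_comb_split p).
rewrite big_seq_cond big1 ?add0r // => e /andP[/SG' G'e /set_mem Gpe].
by rewrite IH ?mulr0.
Qed.

End BourgainDelbaen.

Theorem lemma1p8 (R : realType) (T : choiceType) (Gamma : nat -> set T)
  (ext : forall q, (sig (Gamma q) -> R) -> (T -> R)) (Gamma' : set T) :
  is_BD_data ext -> self_determined ext Gamma' ->
  forall q : nat, Gamma' `&` Delta Gamma q !=set0 ->
  forall (x : sig (Gamma q) -> R) (g : T), Gamma' g ->
    ext q x g = ext q (fun s => if proj1_sig s \in Gamma' then x s else 0) g.
Proof.
move=> [fin [_ [sub [cover [lin [restrE [_ compat]]]]]]] sd q _ x g G'g.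
pose x' (s : sig (Gamma q)) := if sval s \in Gamma' then x s else 0.
pose y (s : sig (Gamma q)) := if sval s \in Gamma' then 0 else x s.
have -> : ext q x = fun t => 1 * ext q x' t + ext q y t.
  rewrite -lin; congr (ext q); apply: funext => s.
  by rewrite /x' /y mul1r; case: (_ \in _); rewrite ?addr0 ?add0r.
rewrite mul1r (ext_eq0_on fin (fun q => properW (sub q)) cover lin restrE compat
  sd q y) ?addr0 //.
by move=> s /mem_set G's; rewrite /y G's.
Qed.
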